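(* Let $H$ be a graph and $k\ge2$, and suppose $G=\mathsf{TJ}_k(H)$ is triangle-free. Then every vertex of $G$ has degree at most $k$; in particular $\Delta(G)\le k$.
   Context: All graphs are finite, simple, undirected; $\Delta(G)$ is the maximum degree. A $k$-clique of a graph $H$ is a set of $k$ pairwise adjacent vertices. For a graph $H$ and integer $k\ge1$, the Token Jumping graph $\mathsf{TJ}_k(H)$ has as vertices the $k$-cliques of $H$, and two $k$-cliques $A,B$ are adjacent iff $|A\cap B|=k-1$. *)

From mathcomp Require Import all_boot.
Set Implicit Arguments. Unset Strict Implicit. Unset Printing Implicit Defensive.

Definition simple_graph (T : finType) (e : rel T) : Prop :=
  symmetric e /\ irreflexive e.

Definition is_kclique (T : finType) (e : rel T) (k : nat) (A : {set T}) : bool :=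
  (#|A| == k) && [forall x in A, forall y in A, (x != y) ==> e x y].

Definition TJ_vertices (T : finType) (e : rel T) (k : nat) : {set {set T}} :=
  [set A | is_kclique e k A].

Definition TJ_adj (T : finType) (e : rel T) (k : nat) (A B : {set T}) : bool :=
  [&& A \in TJ_vertices e k, B \in TJ_vertices e k & #|A :&: B| == k.-1].

Definition TJ_nbhd (T : finType) (e : rel T) (k : nat) (A : {set T}) : {set {set T}} :=
  [set B | TJ_adj e k A B].

Definition TJ_degree (T : finType) (e : rel T) (k : nat) (A : {set T}) : nat :=
  #|TJ_nbhd e k A|.

Definition TJ_triangle_free (T : finType) (e : rel T) (k : nat) : Prop :=
  forall A B C : {set T},
    ~ [&& TJ_adj e k A B, TJ_adj e k B C & TJ_adj e k A C].

(* Maximum degree of TJ_k(H) (0 if it has no vertices). *)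
Definition TJ_maxdeg (T : finType) (e : rel T) (k : nat) : nat :=
  \max_(A in TJ_vertices e k) TJ_degree e k A.

From mathcomp Require Import all_boot zify.

(* A neighbour B of the k-clique A misses exactly one vertex of A, so B |-> A :\: B
   maps the neighbourhood of A into the k singletons of A.  Two neighbours B, C
   missing the same vertex share A :&: B, hence |B :&: C| >= k - 1; equality would
   make A, B, C a triangle, so |B :&: C| = k and B = C. *)

Section TokenJumpingDegree.

Variables (T : finType) (e : rel T) (k : nat).

Lemma card_TJ_vertex {A : {set T}} : A \in TJ_vertices e k -> #|A| = k.
Proof. by rewrite inE => /andP[/eqP]. Qed.

Lemma card_setD_TJ_adj {A B : {set T}} :
  0 < k -> TJ_adj e k A B -> #|A :\: B| = 1.
Proof.
move=> k_gt0 /and3P[Av _ /eqP AB]; rewrite cardsD AB (card_TJ_vertex Av); lia.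
Qed.

Lemma eq_TJ_vertices_of_meet (B C : {set T}) :
  0 < k -> B \in TJ_vertices e k -> C \in TJ_vertices e k ->
  k.-1 <= #|B :&: C| -> #|B :&: C| != k.-1 -> B = C.
Proof.
move=> k_gt0 Bv Cv ge_BC ne_BC.
have BCk : #|B :&: C| = k.
  apply/eqP; rewrite eqn_leq -{1}(card_TJ_vertex Bv) subset_leq_card ?subsetIl //=.
  by move: k_gt0 ge_BC ne_BC; clear; lia.
have BC_B : B :&: C = B.
  by apply/eqP; rewrite eqEcard subsetIl BCk (card_TJ_vertex Bv) leqnn.
have BC_C : B :&: C = C.
  by apply/eqP; rewrite eqEcard subsetIr BCk (card_TJ_vertex Cv) leqnn.
by rewrite -BC_B BC_C.
Qed.

Hypothesis TJ_tf : TJ_triangle_free e k.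

Lemma TJ_nbhd_setD_inj (A : {set T}) :
  0 < k -> {in TJ_nbhd e k A &, injective (fun B => A :\: B)}.
Proof.
move=> k_gt0 B C; rewrite !inE => AB AC AB_AC.
move: (AB) (AC) => /and3P[Av Bv /eqP cAB] /and3P[_ Cv _].
have AB_sub : A :&: B \subset B :&: C.
  apply/subsetP=> x; move/setP/(_ x): AB_AC; rewrite !inE.
  by case: (x \in A); case: (x \in B); case: (x \in C).
apply: eq_TJ_vertices_of_meet => //; first by rewrite -cAB subset_leq_card.
by apply/negP=> /eqP cBC; apply: (TJ_tf A B C); rewrite AB AC /TJ_adj Bv Cv cBC eqxx.
Qed.

Lemma TJ_degree_le (A : {set T}) :
  0 < k -> A \in TJ_vertices e k -> TJ_degree e k A <= k.
Proof.
move=> k_gt0 Av.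
have into_singletons : [set A :\: B | B in TJ_nbhd e k A] \subset [set [set x] | x in A].
  apply/subsetP=> _ /imsetP[B AB ->]; rewrite inE in AB.
  have [x Ex] := cards1P (introT eqP (card_setD_TJ_adj k_gt0 AB)).
  have : x \in A :\: B by rewrite Ex set11.
  by rewrite inE => /andP[_ xA]; rewrite Ex imset_f.
rewrite /TJ_degree -(card_in_imset (TJ_nbhd_setD_inj A k_gt0)).
apply: leq_trans (subset_leq_card into_singletons) _.
by rewrite (card_imset _ set1_inj) (card_TJ_vertex Av).
Qed.

End TokenJumpingDegree.

Theorem lemma4p5 (T : finType) (e : rel T) (k : nat) :
  simple_graph e -> 2 <= k -> TJ_triangle_free e k ->
  (forall A : {set T}, A \in TJ_vertices e k -> TJ_degree e k A <= k) /\
  TJ_maxdeg e k <= k.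
Proof.
move=> _ k_ge2 tf. (* the bound does not use simplicity of H *)
have k_gt0 : 0 < k by apply: leq_trans k_ge2.
have deg_le A := @TJ_degree_le T e k tf A k_gt0.
by split=> //; apply/bigmax_leqP.
Qed.
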